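(* When the greedy algorithm described in the context is run, after the deletion step at any time step $t$, the number of type-2 elements stored in QS is $O(\ell\log t)$.
   Context: A stream of elements from a totally ordered universe arrives one by one. Let $\ell=1/\varepsilon$ be an integer. The stream is partitioned into consecutive chunks of $\ell$ elements; time step $t$ is the arrival of the $t$-th chunk, and $t_0(x)$ is the time step in which $x$ arrives. The summary QS stores elements $e_1<\dots<e_s$ seen so far, each with integers $\mathrm{rmin}(e),\mathrm{rmax}(e)$; by convention $\mathrm{rmin}(e_0)=0$. An element $+\infty$, larger than all others, is inserted at the start of the stream and is always stored as $e_s$. Insert$(x)$: let $e_i$ be the smallest stored element with $e_i>x$; set $\mathrm{rmin}(x)=\mathrm{rmin}(e_{i-1})+1$, $\mathrm{rmax}(x)=\mathrm{rmax}(e_i)$, increase $\mathrm{rmin}(e_j),\mathrm{rmax}(e_j)$ by one for all $j\ge i$, and store $x$. Delete$(e_i)$: remove $e_i$, leaving all other values unchanged. Define $g_i=\mathrm{rmin}(e_i)-\mathrm{rmin}(e_{i-1})$ and $\Delta_i=\mathrm{rmax}(e_i)-\mathrm{rmin}(e_i)$. Band values: each element $x$ has an integer $\mathbf{v}(x)$: at time step $t_0(x)$, $\mathbf{v}(x)=0$; at each time step $t>t_0(x)$, if $t$ is a multiple of $2^{\mathbf{v}(x)}$ then $\mathbf{v}(x)$ is increased by one. Greedy algorithm: at each time step $t$: (i) run Insert on each element of the chunk; (ii) (deletion step) repeatedly run Delete$(e_i)$ for any arbitrarily chosen stored $e_i$ ($i<s$) with $\mathbf{v}(e_i)\le\mathbf{v}(e_{i+1})$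 and $g_i+g_{i+1}+\Delta_{i+1}\le t$, until none exists. After the deletion step at time $t$, a stored element $e_i$ ($i<s$) is called type-1 if $\mathbf{v}(e_i)>\mathbf{v}(e_{i+1})$, and type-2 if it is not type-1 (in which case $g_i+g_{i+1}+\Delta_{i+1}>t$). *)

From mathcomp Require Import all_boot all_order all_algebra.
Set Implicit Arguments. Unset Strict Implicit. Unset Printing Implicit Defensive.
Import Order.TTheory GRing.Theory Num.Theory.

Section Greedy.
Variables (d : Order.disp_t) (T : orderType d).

(* A stored entry: key (None = +infinity), rmin, rmax, arrival time step t0. *)
Record entry := Entry { key : option T; rmin : int; rmax : int; tarr : nat }.

Definition dflt_entry : entry := Entry None 0 0 0.

Definition kless (a : T) (k : option T) : bool :=
  if k is Some b then (a < b)%O else true.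

Fixpoint bandv (t0 t : nat) : nat :=
  match t with
  | 0 => 0
  | t'.+1 => if t'.+1 <= t0 then 0
             else let v := bandv t0 t' in
                  if (2 ^ v %| t'.+1) then v.+1 else v
  end.

Definition ent (s : seq entry) (j : nat) : entry := nth dflt_entry s j.

(* rmin of the predecessor of index j (0-based), with rmin(e_0) = 0 *)
Definition prev_rmin (s : seq entry) (j : nat) : int :=
  if j is j'.+1 then rmin (ent s j') else 0.

Definition bump_entry (e : entry) : entry :=
  Entry (key e) (rmin e + 1) (rmax e + 1) (tarr e).

Definition qs_insert (t : nat) (s : seq entry) (x : T) : seq entry :=
  let i := find (fun e => kless x (key e)) s in
  let nx := Entry (Some x) (prev_rmin s i + 1) (rmax (ent s i)) t in
  take i s ++ nx :: map bump_entry (drop i s).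

(* the t-th chunk (t >= 1) of the stream x with chunks of l elements *)
Definition chunk (l : nat) (x : nat -> T) (t : nat) : seq T :=
  [seq x ((t.-1) * l + k) | k <- iota 0 l].

Definition insert_chunk (l : nat) (x : nat -> T) (t : nat) (s : seq entry) :=
  foldl (qs_insert t) s (chunk l x t).

Definition vband (t : nat) (e : entry) : nat := bandv (tarr e) t.

(* 0-based index j corresponds to e_{j+1}; j.+1 < size s means i < s *)
Definition deletable (t : nat) (s : seq entry) (j : nat) : bool :=
  [&& j.+1 < size s,
      vband t (ent s j) <= vband t (ent s j.+1) &
      ((rmin (ent s j) - prev_rmin s j)
       + (rmin (ent s j.+1) - rmin (ent s j))
       + (rmax (ent s j.+1) - rmin (ent s j.+1))
       <= (t%:Z))%R].

Definition qs_delete (s : seq entry) (j : nat) : seq entry :=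
  take j s ++ drop j.+1 s.

Inductive del_steps (t : nat) : seq entry -> seq entry -> Prop :=
  | del_refl s : del_steps t s s
  | del_step s j s' : deletable t s j -> del_steps t (qs_delete s j) s' ->
                      del_steps t s s'.

Definition deletion_step (t : nat) (s s' : seq entry) : Prop :=
  del_steps t s s' /\ (forall j, ~~ deletable t s' j).

(* initial summary: only +infinity, inserted at the start (time 0),
   with rmin = rmin(e_0) + 1 = 1 and rmax = 1 *)
Definition qs_init : seq entry := [:: Entry None 1 1 0].

Definition greedy_run (l : nat) (x : nat -> T) (S : nat -> seq entry) : Prop :=
  S 0 = qs_init /\
  forall t, 0 < t -> deletion_step t (insert_chunk l x t (S t.-1)) (S t).

Definition num_type2 (t : nat) (s : seq entry) : nat :=
  count (fun j => vband t (ent s j) <= vband t (ent s j.+1)) (iota 0 (size s).-1).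

End Greedy.

From mathcomp Require Import all_boot all_order all_algebra zify.
Set Implicit Arguments. Unset Strict Implicit. Unset Printing Implicit Defensive.
Import Order.TTheory GRing.Theory Num.Theory.

(* Write g_i for rmin(e_i) - rmin(e_{i-1}). Insert gives the new element g = 1 and
   band 0 and leaves every other g unchanged; Delete(e_i) adds g_i to g_{i+1}, and
   the greedy rule only does so when the band of e_{i+1} is at least that of e_i.
   Whether a band value is below u at time t+1 only depends on whether it is below
   some threshold at time t, whatever the arrival time. Hence, for every u, the total
   g of stored elements of band < u is at most l times the number of time steps of
   band < u, which is at most 2^u.
   Along the way the invariants g_i + Delta_i <= t and Delta(e) <= t0(e) are kept.
   A type-2 element e_i that survives the deletion step has
   g_i + g_{i+1} > t - Delta_{i+1} >= t - t0(e_{i+1}) >= (2^v - 1) / 2, where v is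
   the band of e_{i+1}. Summing over the type-2 elements e_i with v(e_{i+1}) = v,
   each g being counted at most twice, there are at most 8 l of them, and only
   log2 t + 2 band values occur. *)

Lemma path_head_eq (X : Type) (e : rel X) x y s :
  e x =1 e y -> path e x s = path e y s.
Proof. by case: s => //= z s ->. Qed.

Lemma pairmap_head_eq (X Y : Type) (f : X -> X -> Y) x y s :
  f x =1 f y -> pairmap f x s = pairmap f y s.
Proof. by case: s => //= z s ->. Qed.

Lemma pairmap_map_inv (X Y : Type) (f : X -> X -> Y) (g : X -> X) x s :
  (forall a b, f (g a) (g b) = f a b) -> pairmap f (g x) (map g s) = pairmap f x s.
Proof. by move=> fg; elim: s x => //= y s IH x; rewrite IH fg. Qed.

Lemma count_by_value (I : Type) (P : pred I) (f : I -> nat) M r :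
  (forall i, f i < M) ->
  count P r = \sum_(v < M) count (fun i => P i && (f i == v)) r.
Proof.
move=> lt_fM; elim: r => [|i r IH] /=; first by rewrite big1.
rewrite big_split /= -IH; congr (_ + _).
rewrite (bigD1 (Ordinal (lt_fM i))) //= eqxx andbT big1 ?addn0 // => v ne_v.
by case: eqP => [fv|_]; [case/eqP: ne_v; apply: val_inj | rewrite andbF].
Qed.

Lemma sum_adjacent_le (R : numDomainType) (F : nat -> R) n :
  (forall k, k < n -> (0 <= F k)%R) ->
  (\sum_(0 <= j < n.-1) (F j + F j.+1) <= (\sum_(0 <= k < n) F k) *+ 2)%R.
Proof.
case: n => [|n] F_ge0; first by rewrite !big_geq // mul0rn.
rewrite big_split mulr2n /= lerD //.
  by rewrite big_nat_recr //= lerDl F_ge0.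
by rewrite big_nat_recl //= lerDr F_ge0.
Qed.

Lemma bandv_before t0 t : t <= t0 -> bandv t0 t = 0.
Proof. by case: t => //= t ->. Qed.

Lemma bandvS t0 t : t0 <= t ->
  bandv t0 t.+1 = if 2 ^ bandv t0 t %| t.+1 then (bandv t0 t).+1 else bandv t0 t.
Proof. by move=> le_t0t /=; rewrite leqNgt ltnS le_t0t. Qed.

Lemma bandv_next_multiple t0 t : t0 <= t ->
  (t %/ 2 ^ bandv t0 t).+1 * 2 ^ bandv t0 t < t0 + 2 ^ (bandv t0 t).+1.
Proof.
elim: t => [|t IH]; first by rewrite leqn0 => /eqP ->.
rewrite leq_eqVlt => /orP [/eqP <-|]; first by rewrite bandv_before // divn1; lia.
rewrite ltnS => le_t0t; move: (IH le_t0t); rewrite bandvS //.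
set v := bandv t0 t; have Dgt0 : 0 < 2 ^ v by rewrite expn_gt0.
have := ltn_ceil t Dgt0; case: ifP => dvd_t1.
  have := leq_divM t.+1 (2 ^ v.+1); rewrite !expnS mulSn; lia.
by rewrite divnS // dvd_t1.
Qed.

Lemma bandv_last_multiple t0 t : t0 < t ->
  exists w, bandv t0 t = w.+1 /\ t0 + 2 ^ w <= t %/ 2 ^ w * 2 ^ w.
Proof.
elim: t => [//|t IH]; rewrite ltnS leq_eqVlt => /orP [/eqP <-|lt_t0t].
  by exists 0; rewrite bandvS // bandv_before // dvd1n divn1; split => //; lia.
have [w [bw le_w]] := IH lt_t0t; rewrite bandvS ?(ltnW lt_t0t) // bw.
have Dgt0 : 0 < 2 ^ w by rewrite expn_gt0.
case: ifP => dvd_t1; last first.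
  exists w; split => //; apply: leq_trans le_w _.
  by rewrite leq_pmul2r // leq_div2r.
exists w.+1; split => //; rewrite divnK //.
move: dvd_t1 le_w; rewrite expnS => /dvdnP [k t1E].
have lt_q : t %/ 2 ^ w < 2 * k.
  by rewrite -(ltn_pmul2r Dgt0); have := leq_divM t (2 ^ w); nia.
have : (t %/ 2 ^ w).+1 * 2 ^ w <= 2 * k * 2 ^ w by rewrite leq_pmul2r.
rewrite mulSn; move: t1E; set D := 2 ^ w; clearbody D; nia.
Qed.

Lemma age_lt_exp_bandv t0 t : t0 <= t -> t - t0 < 2 ^ (bandv t0 t).+1.
Proof.
move=> /bandv_next_multiple; have := ltn_ceil t (expn_gt0 2 (bandv t0 t)); lia.
Qed.

Lemma exp_bandv_le_age t0 t : 2 ^ bandv t0 t <= 2 * (t - t0) + 1.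
Proof.
have [le_tt0|/bandv_last_multiple [w [-> le_w]]] := leqP t t0.
  by rewrite bandv_before // addn1.
have := leq_divM t (2 ^ w); rewrite expnS; lia.
Qed.

Lemma bandv_lt_trunc_log t0 t : bandv t0 t < (trunc_log 2 t).+2.
Proof.
rewrite -(@ltn_exp2l 2) //; have := exp_bandv_le_age t0 t.
have := trunc_log_ltn t (ltnSn 1); rewrite [2 ^ _.+2]expnS; lia.
Qed.

(* Bands below [u] at time [t.+1] are exactly the bands below
   [band_threshold t u] at time [t]: the update of a band value depends on
   the value and on [t], not on the arrival time. *)
Definition band_threshold (t u : nat) : nat :=
  if u is u'.+1 then (if 2 ^ u' %| t.+1 then u' else u) else 0.

Lemma bandvS_lt t0 t u : t0 <= t ->
  (bandv t0 t.+1 < u) = (bandv t0 t < band_threshold t u).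
Proof.
move=> le_t0t; rewrite bandvS //; case: u => [|u] /=; first by case: ifP.
case: (ltngtP (bandv t0 t) u) => [||->]; try by case: ifP; case: ifP; lia.
by case: ifP => //; lia.
Qed.

Lemma count_bandv_lt t u : count (fun x => bandv x t < u) (iota 0 t.+1) <= 2 ^ u.
Proof.
apply: (@leq_trans (count (fun x => t.+1 - 2 ^ u <= x) (iota 0 t.+1))).
  apply: sub_count => x /= lt_bu; have [le_xt|] := leqP x t; last by lia.
  have := age_lt_exp_bandv le_xt.
  have : 2 ^ (bandv x t).+1 <= 2 ^ u by rewrite leq_exp2l.
  lia.
have count_ge k n : count (fun x => k <= x) (iota 0 n) = n - k.
  by elim: n => [|n IH] //; rewrite -addn1 iotaD count_cat IH /= add0n addn0; lia.
by rewrite count_ge; lia.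
Qed.

Section Greedy.
Variables (d : Order.disp_t) (T : orderType d).
Local Notation entry := (entry T).
Local Notation e0 := (dflt_entry T).
Local Notation bump := (@bump_entry _ T).
Implicit Types (s : seq entry) (a b e : entry).

(* [e0] has rmin 0: it stands for e_0 at the head of the paths below. For consecutive
   stored [a], [b], [gap a b] pairs the arrival time of [b] with g_b, and
   [span_le t a b] says g_b + Delta_b <= t. *)
Definition gap a b : nat * int := (tarr b, rmin b - rmin a)%R.
Definition rmin_le a b := (rmin a <= rmin b)%R.
Definition span_le t a b := (rmax b - rmin a <= t%:Z)%R.
Definition entry_ok t e := (rmax e - rmin e <= (tarr e)%:Z)%R && (tarr e <= t).

Definition qs_inv t s :=
  [&& path rmin_le e0 s, path (span_le t) e0 s & all (entry_ok t) s].

Definition gap_mass t u s : int :=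
  \sum_(g <- pairmap gap e0 s | bandv g.1 t < u) g.2.

Definition mass_bound (l t n : nat) s := forall u : nat,
  (gap_mass t u s <= (l * count (fun x => bandv x t < u) (iota 0 n))%N%:Z)%R.

Lemma prev_rminE s j : prev_rmin s j = rmin (nth e0 (e0 :: s) j).
Proof. by case: j. Qed.

Lemma prev_rminS s j : prev_rmin s j.+1 = rmin (ent s j).
Proof. by []. Qed.

Lemma prev_rmin_take s j : j <= size s -> prev_rmin s j = rmin (last e0 (take j s)).
Proof.
rewrite prev_rminE; case: j => [|j] le_js /=; first by rewrite take0.
by rewrite (last_nth e0) size_take_min (minn_idPl le_js) /= nth_take.
Qed.

Lemma qs_insert_split t s x : exists s1 s2 nx,
  [/\ s = s1 ++ s2, qs_insert t s x = s1 ++ nx :: map bump s2,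
      rmin nx = (rmin (last e0 s1) + 1)%R, rmax nx = rmax (head e0 s2) & tarr nx = t].
Proof.
rewrite /qs_insert; set i := find _ s.
have le_is : i <= size s by apply: find_size.
exists (take i s), (drop i s), (Entry (Some x) (prev_rmin s i + 1) (rmax (ent s i)) t).
split=> //; first by rewrite cat_take_drop.
  by rewrite /= prev_rmin_take.
by rewrite /= /ent -nth0 nth_drop addn0.
Qed.

Lemma deletable_split t s j : deletable t s j -> exists s1 a b s2,
  [/\ s = s1 ++ a :: b :: s2, qs_delete s j = s1 ++ b :: s2,
      vband t a <= vband t b & span_le t (last e0 s1) b].
Proof.
case/and3P=> lt_j1s le_band le_span.
have lt_js := ltnW lt_j1s.
exists (take j s), (ent s j), (ent s j.+1), (drop j.+2 s); split => //.
- by rewrite -{1}(cat_take_drop j s) (drop_nth e0 lt_js) (drop_nth e0 lt_j1s).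
- by rewrite /qs_delete (drop_nth e0 lt_j1s).
- by move: le_span; rewrite /span_le -prev_rmin_take; lia.
Qed.

Lemma rmin_le_bump a b : rmin_le (bump a) (bump b) = rmin_le a b.
Proof. by rewrite /rmin_le lerD2r. Qed.

Lemma span_le_bump t a b : span_le t (bump a) (bump b) = span_le t a b.
Proof. by rewrite /span_le /= opprD addrACA subrr addr0. Qed.

Lemma gap_bump a b : gap (bump a) (bump b) = gap a b.
Proof. by rewrite /gap /= opprD addrACA subrr addr0. Qed.

Lemma entry_ok_bump t e : entry_ok t (bump e) = entry_ok t e.
Proof. by rewrite /entry_ok /= opprD addrACA subrr addr0. Qed.

Lemma rmin_le_last a s : path rmin_le a s -> (rmin a <= rmin (last a s))%R.
Proof. by elim: s a => //= b s IH a /andP [le_ab /IH]; apply: le_trans. Qed.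

Lemma qs_inv_insert t s x : qs_inv t s -> qs_inv t (qs_insert t s x).
Proof.
have [s1 [s2 [nx [-> -> rmin_nx rmax_nx tarr_nx]]]] := qs_insert_split t s x.
set p := last e0 s1; have nx_bump : rmin nx = rmin (bump p) by [].
rewrite /qs_inv !cat_path !all_cat /= -/p.
case/and3P=> /andP [rs1 rs2] /andP [-> ss2] /andP [-> oks2].
have p_ge0 : (0 <= rmin p)%R by apply: rmin_le_last rs1.
have span_nx : span_le t p (head e0 s2).
  by case: (s2) ss2 => [_|b s2' /andP []] //; rewrite /span_le /=; lia.
have ok_nx : entry_ok t nx.
  by move: span_nx; rewrite /entry_ok /span_le rmax_nx rmin_nx tarr_nx leqnn andbT -/p; lia.
have oks2_bump : all (entry_ok t) (map bump s2).
  by rewrite all_map (eq_all (@entry_ok_bump t)).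
rewrite (@path_head_eq _ rmin_le nx (bump p)); last by move=> b; rewrite /rmin_le nx_bump.
rewrite (@path_head_eq _ (span_le t) nx (bump p)); last by move=> b; rewrite /span_le nx_bump.
rewrite !path_map (eq_path (@rmin_le_bump)) (eq_path (@span_le_bump t)) rs2 ss2.
rewrite rs1 ok_nx oks2_bump /rmin_le rmin_nx -/p lerDl ler01 !andbT.
by rewrite /span_le rmax_nx.
Qed.

Lemma qs_inv_insert_chunk l x t s : qs_inv t s -> qs_inv t (insert_chunk l x t s).
Proof. by rewrite /insert_chunk; elim: (chunk l x t) s => //= y ys IH s /qs_inv_insert/IH. Qed.

Lemma qs_inv_delete t s j : deletable t s j -> qs_inv t s -> qs_inv t (qs_delete s j).
Proof.
case/deletable_split=> s1 [a [b [s2 [-> -> _ span_pb]]]].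
rewrite /qs_inv !cat_path !all_cat /=.
case/and3P=> /andP [-> /and3P [le_pa le_ab ->]] /andP [-> /and3P [_ _ ->]].
case/andP=> -> /and3P [_ -> ->].
by rewrite span_pb /rmin_le (le_trans le_pa le_ab).
Qed.

Lemma qs_inv_succ t s : qs_inv t s -> qs_inv t.+1 s.
Proof.
rewrite /qs_inv; case/and3P=> -> span_s ok_s /=; apply/andP; split.
  by apply: sub_path span_s => a b; rewrite /span_le => /le_trans; apply; rewrite lez_nat.
by apply: sub_all ok_s => e /andP [Delta_e /leqW]; rewrite /entry_ok Delta_e.
Qed.

Lemma qs_inv_tarr t s : qs_inv t s -> all (fun e => tarr e <= t) s.
Proof. by case/and3P=> _ _; apply: sub_all => e /andP []. Qed.

Lemma qs_inv_init : qs_inv 1 (qs_init T).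
Proof. by []. Qed.

Lemma gap_mass_insert t u s x :
  gap_mass t u (qs_insert t s x) = (gap_mass t u s + (0 < u)%:R)%R.
Proof.
have [s1 [s2 [nx [-> -> rmin_nx _ tarr_nx]]]] := qs_insert_split t s x.
set p := last e0 s1; have nx_bump : rmin nx = rmin (bump p) by [].
rewrite /gap_mass !pairmap_cat /= -/p.
rewrite (@pairmap_head_eq _ _ gap nx (bump p)); last by move=> b; rewrite /gap nx_bump.
rewrite pairmap_map_inv; last exact: gap_bump.
rewrite !big_cat big_cons /= tarr_nx bandv_before // rmin_nx -/p.
by case: u => [|u] /=; lia.
Qed.

Lemma gap_mass_insert_chunk l x t u s :
  gap_mass t u (insert_chunk l x t s) = (gap_mass t u s + (l * (0 < u))%:R)%R.
Proof.
have size_chunk : size (chunk l x t) = l by rewrite size_map size_iota.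
rewrite /insert_chunk -[in RHS]size_chunk.
elim: (chunk l x t) s => [|y ys IH] s /=; first by rewrite addr0.
by rewrite IH gap_mass_insert -addrA -natrD.
Qed.

Lemma gap_mass_delete t u s j : deletable t s j -> path rmin_le e0 s ->
  (gap_mass t u (qs_delete s j) <= gap_mass t u s)%R.
Proof.
case/deletable_split=> s1 [a [b [s2 [-> -> le_band _]]]].
rewrite cat_path /= => /andP [_ /andP [le_pa _]].
rewrite /gap_mass !pairmap_cat !big_cat !big_cons /= -/(pairmap gap b s2) lerD2l.
move: le_pa; rewrite /rmin_le.
case: ifP => [/(leq_ltn_trans le_band) -> | _]; last case: ifP; lia.
Qed.

Lemma gap_mass_succ t u s : all (fun e => tarr e <= t) s ->
  gap_mass t.+1 u s = gap_mass t (band_threshold t u) s.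
Proof.
move=> tarr_le; have : all (fun g => g.1 <= t) (pairmap gap e0 s).
  by elim: s (e0) tarr_le => //= b s IH a /andP [-> /IH ->].
move/allP=> gap_le; rewrite /gap_mass -[LHS]big_filter -[RHS]big_filter.
rewrite (eq_in_filter (a2 := fun g => bandv g.1 t < band_threshold t u)) //.
by move=> g /gap_le /bandvS_lt.
Qed.

Lemma mass_bound_init l : 0 < l -> mass_bound l 1 1 (qs_init T).
Proof.
by move=> l_gt0 u; rewrite /gap_mass big_cons big_nil /gap /=; case: u => [|[|u]] /=; lia.
Qed.

Lemma mass_bound_insert_chunk l x t s :
  mass_bound l t t s -> mass_bound l t t.+1 (insert_chunk l x t s).
Proof.
move=> mb u; rewrite gap_mass_insert_chunk -[t.+1]addn1 iotaD count_cat /= bandv_before //.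
by have := mb u; lia.
Qed.

Lemma mass_bound_succ l t s : all (fun e => tarr e <= t) s ->
  mass_bound l t t.+1 s -> mass_bound l t.+1 t.+1 s.
Proof.
move=> tarr_le mb u; rewrite gap_mass_succ //.
rewrite (@eq_in_count _ _ (fun x => bandv x t < band_threshold t u)); first exact: mb.
by move=> x; rewrite mem_iota ltnS => /andP [_]; apply: bandvS_lt.
Qed.

Lemma del_steps_inv l t n s s' : del_steps t s s' ->
  qs_inv t s -> mass_bound l t n s -> qs_inv t s' /\ mass_bound l t n s'.
Proof.
elim=> [//|{}s j {}s' del_j _ IH] inv mb; apply: IH; first exact: qs_inv_delete.
by move=> u; apply: le_trans (mb u); apply: gap_mass_delete del_j _; case/and3P: inv.
Qed.

Lemma greedy_run_inv l x S : 0 < l -> greedy_run l x S ->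
  forall t, 0 < t -> qs_inv t (S t) /\ mass_bound l t t.+1 (S t).
Proof.
move=> l_gt0 [S0 run].
have step t : qs_inv t.+1 (S t) -> mass_bound l t.+1 t.+1 (S t) ->
    qs_inv t.+1 (S t.+1) /\ mass_bound l t.+1 t.+2 (S t.+1).
  move=> inv mb; have [dels _] := run t.+1 isT.
  apply: del_steps_inv dels _ _; first exact: qs_inv_insert_chunk.
  exact: mass_bound_insert_chunk.
elim=> [//|[|t] IH _].
  by apply: step; rewrite S0; [apply: qs_inv_init | apply: mass_bound_init].
have [inv mb] := IH isT; apply: step; first exact: qs_inv_succ.
by apply: mass_bound_succ mb; apply: qs_inv_tarr.
Qed.

Definition gap_at s k : int := (rmin (ent s k) - prev_rmin s k)%R.

Lemma gap_mass_nth t u s : gap_mass t u s =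
  (\sum_(0 <= k < size s | (bandv (tarr (ent s k)) t < u)%N) gap_at s k)%R.
Proof.
rewrite /gap_mass (big_nth (0%N, 0%R)) size_pairmap big_nat_cond [RHS]big_nat_cond.
apply: eq_big => [k|k /andP [/andP [_ lt_ks] _]].
  by case: (ltnP k (size s)) => [lt_ks|] //=; rewrite (nth_pairmap e0).
by rewrite (nth_pairmap e0) // /gap_at prev_rminE.
Qed.

Lemma gap_at_ge0 s k : path rmin_le e0 s -> k < size s -> (0 <= gap_at s k)%R.
Proof.
by move=> /(pathP e0) le_s /le_s; rewrite /rmin_le /gap_at prev_rminE subr_ge0.
Qed.

Lemma type2_exp_band_le t s j : qs_inv t s -> ~~ deletable t s j -> j.+1 < size s ->
  vband t (ent s j) <= vband t (ent s j.+1) ->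
  ((2 ^ vband t (ent s j.+1))%:Z <= (gap_at s j + gap_at s j.+1) *+ 2)%R.
Proof.
case/and3P=> _ _ /(all_nthP e0) ok_s; rewrite /deletable => + lt_j1s le_band.
rewrite lt_j1s le_band -ltNge /gap_at prev_rminS => lt_t.
have := ok_s _ lt_j1s; rewrite -/(ent s j.+1) => /andP [Delta_le tarr_le].
have := exp_bandv_le_age (tarr (ent s j.+1)) t.
move: lt_t Delta_le; rewrite /vband; lia.
Qed.

Lemma count_type2_band_le l t s v : qs_inv t s -> mass_bound l t t.+1 s ->
  (forall j, ~~ deletable t s j) ->
  count (fun j => (vband t (ent s j) <= vband t (ent s j.+1)) && (vband t (ent s j.+1) == v))
        (iota 0 (size s).-1) <= 8 * l.
Proof.
move=> inv mb nodel; set P := fun j => _ && _.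
pose H k := if vband t (ent s k) <= v then gap_at s k else 0%R.
have H_ge0 k : k < size s -> (0 <= H k)%R.
  by move=> lt_ks; rewrite /H; case: ifP => // _; apply: gap_at_ge0 => //; case/and3P: inv.
have sum_H : (\sum_(0 <= k < size s) H k = gap_mass t v.+1 s)%R.
  by rewrite gap_mass_nth [RHS]big_mkcond; apply: eq_bigr => k _; rewrite /H ltnS.
have pair_le j : j < (size s).-1 -> P j -> ((2 ^ v)%:Z <= (H j + H j.+1) *+ 2)%R.
  move=> lt_j /andP [le_band /eqP band_v]; have lt_j1s : j.+1 < size s by lia.
  by rewrite /H -band_v le_band leqnn; apply: type2_exp_band_le.
have sum_pairs : ((count P (iota 0 (size s).-1) * 2 ^ v)%N%:Z <=
    (\sum_(0 <= j < (size s).-1) (H j + H j.+1)) *+ 2)%R.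
  have -> : iota 0 (size s).-1 = index_iota 0 (size s).-1 by rewrite /index_iota subn0.
  have -> : ((count P (index_iota 0 (size s).-1) * 2 ^ v)%N%:Z =
      \sum_(0 <= j < (size s).-1 | P j) (2 ^ v)%:Z)%R.
    by rewrite big_const_seq iter_addr_0; lia.
  rewrite -sumrMnl big_mkcond; apply: ler_sum_nat => j /andP [_ lt_j].
  case: ifP => [/(pair_le j lt_j) //|_].
  by rewrite mulrn_wge0 // addr_ge0 // H_ge0; lia.
have := sum_adjacent_le H_ge0; rewrite sum_H => sum_adj.
have l_count := leq_mul (leqnn l) (count_bandv_lt t v.+1).
rewrite -(leq_pmul2r (expn_gt0 2 v)) -lez_nat.
move: (mb v.+1) sum_pairs sum_adj l_count; rewrite expnS.
set c := count P _; set K := count _ (iota 0 t.+1); set A := bigop _ _ _.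
set W := gap_mass _ _ _; set X := 2 ^ v; clearbody c K A W X; nia.
Qed.

Lemma num_type2_le l t s : 1 < t -> qs_inv t s -> mass_bound l t t.+1 s ->
  (forall j, ~~ deletable t s j) -> num_type2 t s <= 24 * l * trunc_log 2 t.
Proof.
move=> lt1t inv mb nodel; have log_gt0 : 0 < trunc_log 2 t by apply: trunc_log_max.
rewrite /num_type2 (@count_by_value _ _ (fun j => vband t (ent s j.+1)) (trunc_log 2 t).+2);
  last by move=> j; apply: bandv_lt_trunc_log.
apply: (@leq_trans (\sum_(v < (trunc_log 2 t).+2) 8 * l)).
  by apply: leq_sum => v _; apply: count_type2_band_le.
by rewrite sum_nat_const card_ord; nia.
Qed.

End Greedy.

Theorem mainTheorem5 :
  exists C : nat,
  forall (d : Order.disp_t) (T : orderType d) (l : nat) (x : nat -> T)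
         (S : nat -> seq (entry T)),
    0 < l -> injective x -> greedy_run l x S ->
    forall t : nat, 2 <= t -> num_type2 t (S t) <= C * l * trunc_log 2 t.
Proof.
exists 24 => d T l x S l_gt0 _ run t lt1t.
have [inv mb] := greedy_run_inv l_gt0 run (ltnW lt1t).
have [_ nodel] := run.2 t (ltnW lt1t).
exact: num_type2_le.
Qed.
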